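(* Let $p_1,\ldots,p_m\in\mathbb Z_{>0}$, $p=\operatorname{lcm}(p_1,\ldots,p_m)$, let $\alpha_1,\ldots,\alpha_m$ be words, $e_1,\ldots,e_m\in\mathbb Z_{\ge0}$, and $z,q\in\mathbb C$. Then for every positive integer $k$, \[ S(k)=\sum_{n=1}^{k}z^n n^q\prod_{j=1}^{m}\mathcal H_{\alpha_j}(p_jn)^{e_j}\in\operatorname{span}_{\mathbb C}\{\mathcal H_\beta(pk)\}_\beta, \] where $\beta$ ranges over words.
   Context: A letter is a pair $(r,s)\in\mathbb C^2$ and a word is a finite sequence of letters. For a word $\alpha=((r_1,s_1),\ldots,(r_d,s_d))$ and a positive integer $N$, \[ \mathcal H_{\alpha}(N)=\sum_{N\ge n_1>\cdots>n_d\ge1}\prod_{i=1}^{d}\frac{s_i^{n_i}}{n_i^{r_i}},\qquad \mathcal H_\emptyset(N)=1, \] with $n^r=\exp(r\log n)$ using the real logarithm. *)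

From Stdlib Require Import Reals List Arith.
From Coquelicot Require Import Coquelicot.
Open Scope C_scope.

Definition Cexp (z : C) : C :=
  (exp (Re z) * cos (Im z), exp (Re z) * sin (Im z))%R.

Definition npow (n : nat) (r : C) : C := Cexp (r * RtoC (ln (INR n))).

Fixpoint Cpown (s : C) (n : nat) : C :=
  match n with O => 1 | S k => s * Cpown s k end.

Fixpoint sum1 (f : nat -> C) (N : nat) : C :=
  match N with O => 0 | S M => sum1 f M + f (S M) end.

Fixpoint prod0 (f : nat -> C) (m : nat) : C :=
  match m with O => 1 | S k => prod0 f k * f k end.

Definition letter := (C * C)%type.
Definition word := list letter.

(* H_alpha(N) = sum_{N >= n_1 > ... > n_d >= 1} prod_i s_i^{n_i} / n_i^{r_i},
   computed by the recursion on the first letter: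
   H_{(r,s)::alpha}(N) = sum_{n=1}^N s^n / n^r * H_alpha(n-1). *)
Fixpoint H (alpha : word) (N : nat) : C :=
  match alpha with
  | nil => 1
  | (r, s) :: beta => sum1 (fun n => Cpown s n / npow n r * H beta (n - 1)) N
  end.

Definition lcm_list (p : nat -> nat) (m : nat) : nat :=
  fold_right Nat.lcm 1%nat (map p (seq 0 m)).

Definition Ssum (m : nat) (p : nat -> nat) (alpha : nat -> word) (e : nat -> nat)
  (z q : C) (k : nat) : C :=
  sum1 (fun n => Cpown z n * npow n q *
                 prod0 (fun j => Cpown (H (alpha j) (p j * n)) (e j)) m) k.

Definition Hcomb (l : list (C * word)) (N : nat) : C :=
  fold_right (fun cb acc => fst cb * H (snd cb) N + acc) 0 l.

From Stdlib Require Import Reals List Arith Lia Lra.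
From Coquelicot Require Import Coquelicot.
Open Scope C_scope.

(* Let V be the C-span of the sequences N |-> H_beta(N). Since
   H_{(r,s) beta}(N) = sum_{n <= N} s^n n^-r H_beta(n-1), V is stable under
   g |-> sum_{n <= N} s^n n^-r g(n-1), under g |-> sum_{n <= N} s^n n^-r g(n)
   (split g(n) = g(n-1) + last term and merge the two letters), and under
   products (the quasi-shuffle recursion). To change the argument from n to d n,
   note that the letter M |-> [d | M] s^(M/d) (M/d)^-r is, for M >= 1, the
   combination d^r/d sum_(j=1..d) (w^j sigma)^M M^-r over the d-th roots of unity
   w^j, where sigma^d = s. Hence each n |-> H_alpha(p_j n) is the restriction of an
   element of V to the multiples of p = lcm p_j, so is the product, and one more
   filtered letter z^n n^q turns the partial sums S(k) into an element of V read
   at p k. *)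

Lemma Cpown_Cpow : Cpown = Cpow.
Proof. reflexivity. Qed.

Lemma INR_C_neq0 (d : nat) : (0 < d)%nat -> RtoC (INR d) <> 0.
Proof.
  intros Hd E. apply (f_equal fst) in E. simpl in E.
  apply (not_0_INR d); [lia | exact E].
Qed.

Lemma Cexp_add (a b : C) : Cexp (a + b) = Cexp a * Cexp b.
Proof.
  destruct a as [a1 a2], b as [b1 b2]. unfold Cexp, Cmult, Cplus. simpl.
  rewrite exp_plus, cos_plus, sin_plus. f_equal; ring.
Qed.

Lemma Cexp_0 : Cexp 0 = 1.
Proof.
  unfold Cexp. simpl. rewrite exp_0, cos_0, sin_0.
  apply injective_projections; simpl; ring.
Qed.

Lemma Cexp_neq0 (a : C) : Cexp a <> 0.
Proof.
  destruct a as [a b]. unfold Cexp. simpl. intro E.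
  assert (E1 := f_equal fst E). assert (E2 := f_equal snd E). simpl in E1, E2.
  assert (He := exp_pos a). assert (Hs := sin2_cos2 b). unfold Rsqr in Hs.
  apply Rmult_integral in E1. apply Rmult_integral in E2.
  destruct E1 as [E1|E1]; [lra|]. destruct E2 as [E2|E2]; [lra|].
  rewrite E1, E2 in Hs. lra.
Qed.

Lemma Cexp_pow (a : C) (n : nat) : Cexp a ^ n = Cexp (INR n * a).
Proof.
  induction n as [|n IH]; simpl Cpow.
  - replace (RtoC (INR 0) * a) with (RtoC 0) by (simpl; ring). now rewrite Cexp_0.
  - rewrite IH, <- Cexp_add, S_INR, RtoC_plus. f_equal. ring.
Qed.

(* Polar form: [s = |s| (x + i y)] with [x^2 + y^2 = 1] and angle [± acos x]. *)
Lemma Cexp_surj (s : C) : s <> 0 -> exists w, Cexp w = s.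
Proof.
  destruct s as [a b]. intros Hs.
  assert (Hab : (0 < a * a + b * b)%R).
  { destruct (Req_dec a 0) as [Ha|Ha]; destruct (Req_dec b 0) as [Hb|Hb].
    - subst. exfalso. apply Hs. reflexivity.
    - nra. - nra. - nra. }
  set (rho := sqrt (a * a + b * b)).
  assert (Hr : (0 < rho)%R) by (apply sqrt_lt_R0; exact Hab).
  assert (Hr2 : (rho * rho = a * a + b * b)%R) by (apply sqrt_sqrt; lra).
  set (x := (a / rho)%R). set (y := (b / rho)%R).
  assert (Hxy : (x * x + y * y = 1)%R).
  { assert (E : (x * x + y * y = (a * a + b * b) / (rho * rho))%R)
      by (unfold x, y; field; lra).
    rewrite E, <- Hr2. field. lra. }
  assert (Hx : (-1 <= x <= 1)%R) by nra.
  assert (Hsq : sqrt (1 - x²) = Rabs y).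
  { rewrite <- sqrt_Rsqr_abs. f_equal. unfold Rsqr. lra. }
  destruct (Rle_or_lt 0 y) as [Hy|Hy].
  - exists (ln rho, acos x). unfold Cexp. simpl.
    rewrite exp_ln, cos_acos, sin_acos, Hsq, Rabs_right by (assumption || lra).
    unfold x, y. f_equal; field; lra.
  - exists (ln rho, - acos x)%R. unfold Cexp. simpl.
    rewrite exp_ln, cos_neg, sin_neg, cos_acos, sin_acos, Hsq, Rabs_left
      by (assumption || lra).
    unfold x, y. f_equal; field; lra.
Qed.

Lemma Cpow_root_exists (s : C) (d : nat) : (0 < d)%nat -> exists sigma, sigma ^ d = s.
Proof.
  intros Hd. destruct (Ceq_dec s 0) as [->|Hs].
  - exists 0. destruct d as [|d]; [lia|]. simpl. ring.
  - destruct (Cexp_surj s Hs) as [w <-]. exists (Cexp (w / INR d)).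
    rewrite Cexp_pow. f_equal. field. now apply INR_C_neq0.
Qed.

Lemma npow_add (n : nat) (a b : C) : npow n (a + b) = npow n a * npow n b.
Proof. unfold npow. rewrite <- Cexp_add. f_equal. ring. Qed.

Lemma npow_neq0 (n : nat) (a : C) : npow n a <> 0.
Proof. apply Cexp_neq0. Qed.

Lemma npow_mul (d m : nat) (r : C) :
  (0 < d)%nat -> (0 < m)%nat -> npow (d * m) r = npow d r * npow m r.
Proof.
  intros Hd Hm. unfold npow. rewrite <- Cexp_add, mult_INR, ln_mult, RtoC_plus.
  - f_equal. ring.
  - apply lt_0_INR; lia.
  - apply lt_0_INR; lia.
Qed.

Lemma npow_opp (n : nat) (r : C) : npow n (- r) = / npow n r.
Proof.
  assert (Hinv : npow n (- r) * npow n r = 1).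
  { rewrite <- npow_add. unfold npow. rewrite <- Cexp_0. f_equal. ring. }
  rewrite <- (Cmult_1_l (/ npow n r)), <- Hinv. field. apply npow_neq0.
Qed.

Definition root_unity (d : nat) : C := Cexp (0%R, (2 * PI / INR d)%R).

Lemma root_unity_pow (d n : nat) :
  root_unity d ^ n = (cos (INR n * (2 * PI / INR d)), sin (INR n * (2 * PI / INR d))).
Proof.
  unfold root_unity. rewrite Cexp_pow.
  replace (RtoC (INR n) * (0%R, (2 * PI / INR d)%R))
    with ((0%R, (INR n * (2 * PI / INR d))%R) : C)
    by (apply injective_projections; simpl; ring).
  unfold Cexp. simpl. now rewrite exp_0, !Rmult_1_l.
Qed.

Lemma root_unity_pow_order (d : nat) : (0 < d)%nat -> root_unity d ^ d = 1.
Proof.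
  intros Hd. rewrite root_unity_pow.
  replace (INR d * (2 * PI / INR d))%R with (2 * PI)%R
    by (field; apply not_0_INR; lia).
  now rewrite cos_2PI, sin_2PI.
Qed.

Lemma root_unity_pow_neq1 (d r : nat) : (0 < r < d)%nat -> root_unity d ^ r <> 1.
Proof.
  intros Hr E. rewrite root_unity_pow in E.
  assert (E1 := f_equal fst E). assert (E2 := f_equal snd E). simpl in E1, E2.
  set (x := (INR r * (2 * PI / INR d))%R) in *.
  assert (Hd : (0 < INR d)%R) by (apply lt_0_INR; lia).
  assert (Hrp : (0 < INR r)%R) by (apply lt_0_INR; lia).
  assert (Hrd : (INR r < INR d)%R) by (apply lt_INR; lia).
  assert (Hpi := PI_RGT_0).
  assert (Hx : (x * INR d = 2 * PI * INR r)%R) by (unfold x; field; lra).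
  assert (Hx0 : (0 < x)%R) by nra.
  assert (Hx1 : (x < 2 * PI)%R) by nra.
  destruct (sin_eq_0_0 x E2) as [k Hk].
  rewrite Hk in Hx0, Hx1.
  assert (Hk0 : (0 < IZR k)%R) by nra.
  assert (Hk1 : (IZR k < 2)%R) by nra.
  apply lt_IZR in Hk0. apply lt_IZR in Hk1.
  assert (k = 1%Z) as -> by lia.
  rewrite Hk, Rmult_1_l, cos_PI in E1. lra.
Qed.

Lemma root_unity_pow_mod (d M : nat) :
  (0 < d)%nat -> root_unity d ^ M = root_unity d ^ (M mod d).
Proof.
  intros Hd. rewrite (Nat.div_mod M d) at 1 by lia.
  rewrite Cpow_add_r, Cpow_mult_r, root_unity_pow_order, Cpow_1_l by exact Hd. ring.
Qed.

Lemma sum1_ext (f g : nat -> C) (N : nat) :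
  (forall n, (1 <= n)%nat -> f n = g n) -> sum1 f N = sum1 g N.
Proof.
  intros E. induction N as [|N IH]; simpl; [reflexivity|]. now rewrite IH, E by lia.
Qed.

Lemma sum1_plus (f g : nat -> C) (N : nat) :
  sum1 (fun n => f n + g n) N = sum1 f N + sum1 g N.
Proof. induction N as [|N IH]; simpl; [ring|]. rewrite IH. ring. Qed.

Lemma sum1_scal_l (c : C) (f : nat -> C) (N : nat) :
  sum1 (fun n => c * f n) N = c * sum1 f N.
Proof. induction N as [|N IH]; simpl; [ring|]. rewrite IH. ring. Qed.

Lemma sum1_scal_r (c : C) (f : nat -> C) (N : nat) :
  sum1 (fun n => f n * c) N = sum1 f N * c.
Proof. induction N as [|N IH]; simpl; [ring|]. rewrite IH. ring. Qed.

Lemma sum1_exchange (A : nat -> nat -> C) (N d : nat) :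
  sum1 (fun n => sum1 (fun j => A j n) d) N = sum1 (fun j => sum1 (A j) N) d.
Proof.
  induction N as [|N IH]; simpl.
  - induction d as [|d IHd]; simpl; [reflexivity|]. rewrite <- IHd. ring.
  - rewrite IH, <- sum1_plus. reflexivity.
Qed.

Lemma sum1_const (c : C) (d : nat) : sum1 (fun _ => c) d = INR d * c.
Proof.
  induction d as [|d IH]; simpl sum1; [simpl; ring|]. rewrite IH, S_INR, RtoC_plus. ring.
Qed.

Lemma sum1_geometric_root_unity (x : C) (d : nat) :
  x ^ d = 1 -> x <> 1 -> sum1 (fun j => x ^ j) d = 0.
Proof.
  intros Hd Hx.
  assert (Htel : forall n, (x - 1) * sum1 (fun j => x ^ j) n = x * x ^ n - x).
  { induction n as [|n IH]; simpl; [ring|]. rewrite Cmult_plus_distr_l, IH. ring. }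
  assert (Hx1 : x - 1 <> 0) by now apply Cminus_eq_contra.
  specialize (Htel d). rewrite Hd in Htel.
  replace (sum1 (fun j => x ^ j) d) with ((x - 1) * sum1 (fun j => x ^ j) d / (x - 1))
    by (field; exact Hx1).
  rewrite Htel. field. exact Hx1.
Qed.

Lemma sum1_root_unity_pow (d M : nat) : (0 < d)%nat ->
  sum1 (fun j => (root_unity d ^ M) ^ j) d = if (M mod d =? 0)%nat then RtoC (INR d) else 0.
Proof.
  intros Hd. rewrite (root_unity_pow_mod d M Hd).
  destruct (Nat.eqb_spec (M mod d) 0) as [E|E].
  - rewrite E. simpl Cpow. rewrite (sum1_ext _ (fun _ => 1)), sum1_const
      by (intros; apply Cpow_1_l). ring.
  - apply sum1_geometric_root_unity.
    + now rewrite <- Cpow_mult_r, Nat.mul_comm, Cpow_mult_r, root_unity_pow_order, Cpow_1_l.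
    + apply root_unity_pow_neq1. split; [lia|]. apply Nat.mod_upper_bound. lia.
Qed.

Lemma sum1_mul (x y : nat -> C) (N : nat) :
  sum1 x N * sum1 y N
  = sum1 (fun n => x n * sum1 y (n - 1) + y n * sum1 x (n - 1) + x n * y n) N.
Proof.
  induction N as [|N IH]; simpl sum1; [ring|].
  rewrite <- IH, Nat.sub_0_r. ring.
Qed.

Lemma sum1_dilate (d : nat) (f : nat -> C) :
  (0 < d)%nat -> (forall M, (M mod d <> 0)%nat -> f M = 0) ->
  forall n c, (c < d)%nat -> sum1 f (d * n + c) = sum1 (fun m => f (d * m)%nat) n.
Proof.
  intros Hd Hf.
  assert (Hrem : forall n c, (c < d)%nat -> sum1 f (d * n + c) = sum1 f (d * n)).
  { intros n c. induction c as [|c IH]; intros Hc; [now rewrite Nat.add_0_r|].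
    rewrite Nat.add_succ_r. simpl sum1. rewrite IH by lia.
    rewrite Hf; [ring|].
    replace (S (d * n + c)) with (S c + n * d)%nat by lia.
    rewrite Nat.Div0.mod_add, Nat.mod_small; lia. }
  intros n c Hc. rewrite Hrem by exact Hc. clear c Hc.
  induction n as [|n IH]; [now rewrite Nat.mul_0_r|].
  replace (d * S n)%nat with (S (d * n + (d - 1))) at 1 by lia.
  simpl sum1. rewrite Hrem, IH by lia.
  now replace (S (d * n + (d - 1))) with (d * S n)%nat by lia.
Qed.

Definition Hspan (g : nat -> C) : Prop := exists l, forall N, g N = Hcomb l N.

Lemma Hspan_ext (f g : nat -> C) : (forall N, f N = g N) -> Hspan f -> Hspan g.
Proof. intros E [l Hl]. exists l. intros N. rewrite <- E. apply Hl. Qed.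

Lemma Hspan_H (b : word) : Hspan (H b).
Proof. exists ((RtoC 1, b) :: nil). intros N. simpl. ring. Qed.

Lemma Hspan_const (c : C) : Hspan (fun _ => c).
Proof. exists ((c, nil) :: nil). intros N. simpl. ring. Qed.

Lemma Hcomb_app (l1 l2 : list (C * word)) (N : nat) :
  Hcomb (l1 ++ l2) N = Hcomb l1 N + Hcomb l2 N.
Proof. induction l1 as [|[c b] l1 IH]; simpl; [ring|]. rewrite IH. ring. Qed.

Lemma Hspan_plus (f g : nat -> C) : Hspan f -> Hspan g -> Hspan (fun N => f N + g N).
Proof.
  intros [l1 H1] [l2 H2]. exists (l1 ++ l2). intros N. now rewrite Hcomb_app, H1, H2.
Qed.

Lemma Hspan_scal (c : C) (f : nat -> C) : Hspan f -> Hspan (fun N => c * f N).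
Proof.
  intros [l Hl]. exists (map (fun cb => (c * fst cb, snd cb)) l). intros N. rewrite Hl.
  clear Hl. induction l as [|[c' b] l IH]; simpl; [ring|]. rewrite <- IH. ring.
Qed.

Lemma Hspan_sum1 (f : nat -> nat -> C) (d : nat) :
  (forall j, Hspan (f j)) -> Hspan (fun N => sum1 (fun j => f j N) d).
Proof.
  intros Hf. induction d as [|d IH]; simpl.
  - apply Hspan_const.
  - now apply Hspan_plus.
Qed.

Lemma Hspan_linear_image (T : (nat -> C) -> nat -> C) :
  (forall f g, (forall n, f n = g n) -> forall N, T f N = T g N) ->
  (forall c f g N, T (fun n => c * f n + g n) N = c * T f N + T g N) ->
  (forall b, Hspan (T (H b))) ->
  forall g, Hspan g -> Hspan (T g).
Proof.
  intros Text Tlin TH g [l Hl].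
  assert (T0 : forall N, T (fun _ => 0) N = 0).
  { intros N. rewrite (Text _ (fun n => -1 * 0 + 0)) by (intros; ring).
    rewrite Tlin. ring. }
  apply Hspan_ext with (f := T (Hcomb l)).
  { intros N. apply Text. intros n. symmetry. apply Hl. }
  clear Hl. induction l as [|[c b] l IH].
  - apply Hspan_ext with (f := fun _ => 0); [intros N; symmetry; apply T0|].
    apply Hspan_const.
  - apply Hspan_ext with (f := fun N => c * T (H b) N + T (Hcomb l) N).
    + intros N. symmetry. apply Tlin.
    + apply Hspan_plus; [apply Hspan_scal|]; auto.
Qed.

Definition letter_term (r s : C) (n : nat) : C := s ^ n / npow n r.

Lemma letter_term_mul (r s r' s' : C) (n : nat) :
  letter_term r s n * letter_term r' s' n = letter_term (r + r') (s * s') n.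
Proof.
  unfold letter_term. rewrite Cpow_mult_l, npow_add. field. split; apply npow_neq0.
Qed.

Definition letter_sum (r s : C) (sh : nat) (g : nat -> C) (N : nat) : C :=
  sum1 (fun n => letter_term r s n * g (n - sh)%nat) N.

Lemma H_cons (r s : C) (b : word) (N : nat) : H ((r, s) :: b) N = letter_sum r s 1 (H b) N.
Proof. reflexivity. Qed.

Lemma H_cons_S (r s : C) (b : word) (N : nat) :
  H ((r, s) :: b) (S N) = H ((r, s) :: b) N + letter_term r s (S N) * H b N.
Proof. rewrite !H_cons. unfold letter_sum. simpl sum1. now rewrite Nat.sub_0_r. Qed.

Lemma letter_sum_ext (r s : C) (sh : nat) (f g : nat -> C) :
  (forall n, f n = g n) -> forall N, letter_sum r s sh f N = letter_sum r s sh g N.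
Proof. intros E N. apply sum1_ext. intros n _. now rewrite E. Qed.

Lemma letter_sum_linear (r s : C) (sh : nat) (c : C) (f g : nat -> C) (N : nat) :
  letter_sum r s sh (fun n => c * f n + g n) N
  = c * letter_sum r s sh f N + letter_sum r s sh g N.
Proof.
  unfold letter_sum. rewrite <- sum1_scal_l, <- sum1_plus. apply sum1_ext. intros. ring.
Qed.

Lemma letter_sum0_H_cons (r s r' s' : C) (b : word) (N : nat) :
  letter_sum r s 0 (H ((r', s') :: b)) N
  = H ((r, s) :: (r', s') :: b) N + H ((r + r', s * s') :: b) N.
Proof.
  rewrite !H_cons. unfold letter_sum. rewrite <- sum1_plus.
  apply sum1_ext. intros [|n] Hn; [lia|].
  rewrite Nat.sub_0_r, H_cons_S, <- letter_term_mul. simpl. rewrite Nat.sub_0_r. ring.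
Qed.

Lemma Hspan_letter_sum (r s : C) (sh : nat) (g : nat -> C) :
  (sh <= 1)%nat -> Hspan g -> Hspan (letter_sum r s sh g).
Proof.
  intros Hsh. apply Hspan_linear_image; [apply letter_sum_ext | apply letter_sum_linear |].
  intros b. destruct sh as [|[|sh]]; [| apply Hspan_H with (b := (r, s) :: b) | lia].
  destruct b as [|[r' s'] b].
  - apply Hspan_H with (b := (r, s) :: nil).
  - eapply Hspan_ext; [intros N; symmetry; apply letter_sum0_H_cons|].
    apply Hspan_plus; apply Hspan_H.
Qed.

Lemma H_cons_mul (r1 s1 r2 s2 : C) (a b : word) (N : nat) :
  H ((r1, s1) :: a) N * H ((r2, s2) :: b) N
  = letter_sum r1 s1 1 (fun n => H a n * H ((r2, s2) :: b) n) N
    + letter_sum r2 s2 1 (fun n => H ((r1, s1) :: a) n * H b n) N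
    + letter_sum (r1 + r2) (s1 * s2) 1 (fun n => H a n * H b n) N.
Proof.
  rewrite !H_cons. unfold letter_sum at 1 2. rewrite sum1_mul. unfold letter_sum.
  rewrite <- !sum1_plus. apply sum1_ext. intros n _.
  change (sum1 (fun m => letter_term r1 s1 m * H a (m - 1)) (n - 1))
    with (H ((r1, s1) :: a) (n - 1)).
  change (sum1 (fun m => letter_term r2 s2 m * H b (m - 1)) (n - 1))
    with (H ((r2, s2) :: b) (n - 1)).
  rewrite <- letter_term_mul. ring.
Qed.

Lemma Hspan_H_mul (a b : word) : Hspan (fun N => H a N * H b N).
Proof.
  revert b. induction a as [|[r1 s1] a IHa]; intros b.
  - eapply Hspan_ext; [intros N; symmetry; apply Cmult_1_l | apply Hspan_H].
  - induction b as [|[r2 s2] b IHb].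
    + eapply Hspan_ext; [intros N; symmetry; apply Cmult_1_r | apply Hspan_H].
    + eapply Hspan_ext; [intros N; symmetry; apply H_cons_mul|].
      repeat apply Hspan_plus; apply Hspan_letter_sum; auto.
Qed.

Lemma Hspan_mul (f g : nat -> C) : Hspan f -> Hspan g -> Hspan (fun N => f N * g N).
Proof.
  intros Hf. apply (Hspan_linear_image (fun g N => f N * g N));
    [intros ? ? E N; now rewrite E | intros; ring |].
  intros b. apply (Hspan_linear_image (fun f N => f N * H b N));
    [intros ? ? E N; now rewrite E | intros; ring | intros a; apply Hspan_H_mul | exact Hf].
Qed.

Lemma Hspan_pow (f : nat -> C) (e : nat) : Hspan f -> Hspan (fun N => f N ^ e).
Proof.
  intros Hf. induction e as [|e IH]; simpl.
  - apply Hspan_const.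
  - now apply Hspan_mul.
Qed.

Definition dilated_letter (d : nat) (r s : C) (M : nat) : C :=
  if (M mod d =? 0)%nat then letter_term r s (M / d) else 0.

Lemma dilated_letter_mul (d : nat) (r s : C) (m : nat) :
  (0 < d)%nat -> dilated_letter d r s (d * m) = letter_term r s m.
Proof.
  intros Hd. unfold dilated_letter.
  rewrite Nat.mul_comm, Nat.Div0.mod_mul, Nat.div_mul by lia. reflexivity.
Qed.

Lemma dilated_letter_off (d : nat) (r s : C) (M : nat) :
  (M mod d <> 0)%nat -> dilated_letter d r s M = 0.
Proof. intros HM. unfold dilated_letter. now destruct (Nat.eqb_spec (M mod d) 0). Qed.

(* Roots-of-unity filter: for [sigma^d = s], [sum_(j=1..d) (w^j sigma)^M] is
   [d sigma^M] when [d | M] and [0] otherwise. *)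
Lemma dilated_letter_roots (d : nat) (r s : C) : (0 < d)%nat ->
  exists k sigma, forall M, (1 <= M)%nat ->
    dilated_letter d r s M = sum1 (fun j => k * letter_term r (root_unity d ^ j * sigma) M) d.
Proof.
  intros Hd. destruct (Cpow_root_exists s d Hd) as [sigma Hsigma].
  exists (npow d r / INR d), sigma. intros M HM.
  rewrite (sum1_ext _
    (fun j => npow d r / INR d * letter_term r sigma M * (root_unity d ^ M) ^ j)).
  2:{ intros j _. unfold letter_term. rewrite Cpow_mult_l, <- !Cpow_mult_r, Nat.mul_comm.
      field. repeat split; (apply npow_neq0 || now apply INR_C_neq0). }
  rewrite sum1_scal_l, sum1_root_unity_pow by exact Hd.
  unfold dilated_letter. destruct (Nat.eqb_spec (M mod d) 0) as [E|E]; [|ring].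
  set (m := (M / d)%nat).
  assert (EM : M = (d * m)%nat) by (apply Nat.Div0.div_exact; exact E).
  clearbody m. subst M.
  unfold letter_term. rewrite Cpow_mult_r, Hsigma, npow_mul by nia.
  field. repeat split; (apply npow_neq0 || now apply INR_C_neq0).
Qed.

Definition dilated_letter_sum (d : nat) (r s : C) (sh : nat) (g : nat -> C) (N : nat)
  : C :=
  sum1 (fun M => dilated_letter d r s M * g (M - sh)%nat) N.

Lemma Hspan_dilated_letter_sum (d : nat) (r s : C) (sh : nat) (g : nat -> C) :
  (0 < d)%nat -> (sh <= 1)%nat -> Hspan g -> Hspan (dilated_letter_sum d r s sh g).
Proof.
  intros Hd Hsh Hg. destruct (dilated_letter_roots d r s Hd) as [k [sigma Hk]].
  apply Hspan_ext with
    (f := fun N => sum1 (fun j => k * letter_sum r (root_unity d ^ j * sigma) sh g N) d).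
  - intros N. unfold dilated_letter_sum, letter_sum. symmetry.
    transitivity (sum1 (fun M => sum1 (fun j =>
      k * (letter_term r (root_unity d ^ j * sigma) M * g (M - sh)%nat)) d) N).
    + apply sum1_ext. intros M HM. rewrite Hk, <- sum1_scal_r by exact HM.
      apply sum1_ext. intros. ring.
    + rewrite sum1_exchange. apply sum1_ext. intros j _. now rewrite sum1_scal_l.
  - apply Hspan_sum1. intros j. now apply Hspan_scal, Hspan_letter_sum.
Qed.

Lemma dilated_letter_sum_mul (d : nat) (r s : C) (sh : nat) (g : nat -> C) (n c : nat) :
  (0 < d)%nat -> (c < d)%nat ->
  dilated_letter_sum d r s sh g (d * n + c)
  = sum1 (fun m => letter_term r s m * g (d * m - sh)%nat) n.
Proof.
  intros Hd Hc. unfold dilated_letter_sum. rewrite sum1_dilate by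
    (assumption || (intros M HM; rewrite dilated_letter_off by exact HM; ring)).
  apply sum1_ext. intros m _. now rewrite dilated_letter_mul.
Qed.

(* Every residue class [c] is needed in the induction: [H (l :: b)] at [d n + c]
   involves [H b] at [d m - 1], of residue [d - 1]. *)
Lemma H_dilate (a : word) (d : nat) : (0 < d)%nat ->
  forall c, (c < d)%nat -> exists G, Hspan G /\ forall n, G (d * n + c)%nat = H a n.
Proof.
  intros Hd. induction a as [|[r s] b IH]; intros c Hc.
  - exists (fun _ => 1). split; [apply Hspan_const | reflexivity].
  - destruct (IH (d - 1)%nat ltac:(lia)) as [G [HG EG]].
    exists (dilated_letter_sum d r s 1 G). split; [now apply Hspan_dilated_letter_sum|].
    intros n. rewrite dilated_letter_sum_mul, H_cons by assumption.
    apply sum1_ext. intros m Hm.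
    replace (d * m - 1)%nat with (d * (m - 1) + (d - 1))%nat by nia. now rewrite EG.
Qed.

Definition Hspan_on_multiples (P : nat) (f : nat -> C) : Prop :=
  exists G, Hspan G /\ forall n, G (P * n)%nat = f n.

Lemma Hspan_on_multiples_H (P p : nat) (a : word) :
  (0 < P)%nat -> Nat.divide p P -> Hspan_on_multiples P (fun n => H a (p * n)%nat).
Proof.
  intros HP [d ->]. assert (Hd : (0 < d)%nat) by (destruct d; lia).
  destruct (H_dilate a d Hd 0 Hd) as [G [HG EG]].
  exists G. split; [exact HG|]. intros n. rewrite <- EG. f_equal. lia.
Qed.

Lemma Hspan_on_multiples_mul (P : nat) (f g : nat -> C) :
  Hspan_on_multiples P f -> Hspan_on_multiples P g ->
  Hspan_on_multiples P (fun n => f n * g n).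
Proof.
  intros [F [HF EF]] [G [HG EG]]. exists (fun N => F N * G N).
  split; [now apply Hspan_mul|]. intros n. now rewrite EF, EG.
Qed.

Lemma Hspan_on_multiples_pow (P : nat) (f : nat -> C) (e : nat) :
  Hspan_on_multiples P f -> Hspan_on_multiples P (fun n => f n ^ e).
Proof.
  intros [F [HF EF]]. exists (fun N => F N ^ e).
  split; [now apply Hspan_pow|]. intros n. now rewrite EF.
Qed.

Lemma Hspan_on_multiples_prod0 (P : nat) (f : nat -> nat -> C) (m : nat) :
  (forall j, (j < m)%nat -> Hspan_on_multiples P (f j)) ->
  Hspan_on_multiples P (fun n => prod0 (fun j => f j n) m).
Proof.
  induction m as [|m IH]; intros Hf; simpl.
  - exists (fun _ => 1). split; [apply Hspan_const | reflexivity].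
  - apply Hspan_on_multiples_mul; auto.
Qed.

Lemma fold_lcm_spec (l : list nat) : (forall x, In x l -> (0 < x)%nat) ->
  (0 < fold_right Nat.lcm 1%nat l)%nat /\
  forall x, In x l -> Nat.divide x (fold_right Nat.lcm 1%nat l).
Proof.
  induction l as [|a l IH]; intros Hl; simpl; [split; [lia | intros x []]|].
  destruct IH as [IH1 IH2]; [intros x Hx; apply Hl; now right|].
  split.
  - assert (Ha : (0 < a)%nat) by (apply Hl; now left).
    enough (Nat.lcm a (fold_right Nat.lcm 1%nat l) <> 0)%nat by lia.
    rewrite Nat.lcm_eq_0. lia.
  - intros x [<-|Hx]; [apply Nat.divide_lcm_l|].
    eapply Nat.divide_trans; [now apply IH2 | apply Nat.divide_lcm_r].
Qed.

Lemma lcm_list_spec (p : nat -> nat) (m : nat) : (forall j, (j < m)%nat -> (0 < p j)%nat) ->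
  (0 < lcm_list p m)%nat /\ forall j, (j < m)%nat -> Nat.divide (p j) (lcm_list p m).
Proof.
  intros Hp. destruct (fold_lcm_spec (map p (seq 0 m))) as [Hpos Hdiv].
  - intros x Hx. apply in_map_iff in Hx. destruct Hx as [j [<- Hj]].
    apply in_seq in Hj. apply Hp. lia.
  - split; [exact Hpos|]. intros j Hj. apply Hdiv, in_map, in_seq. lia.
Qed.

Theorem theorem6p1 (m : nat) (p : nat -> nat) (alpha : nat -> word)
  (e : nat -> nat) (z q : C) :
  (forall j, (j < m)%nat -> (0 < p j)%nat) ->
  exists l : list (C * word),
    forall k : nat, (0 < k)%nat ->
      Ssum m p alpha e z q k = Hcomb l (lcm_list p m * k).
Proof.
  intros Hp. destruct (lcm_list_spec p m Hp) as [HP HPdiv].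
  set (P := lcm_list p m) in *.
  destruct (Hspan_on_multiples_prod0 P (fun j n => H (alpha j) (p j * n) ^ e j) m)
    as [G [HG EG]].
  { intros j Hj. apply Hspan_on_multiples_pow, Hspan_on_multiples_H; auto. }
  destruct (Hspan_dilated_letter_sum P (- q) z 0 G HP (Nat.le_0_l 1) HG) as [l Hl].
  exists l. intros k _.
  rewrite <- Hl, <- (Nat.add_0_r (P * k)), dilated_letter_sum_mul by exact HP.
  unfold Ssum. rewrite Cpown_Cpow. apply sum1_ext. intros n _.
  rewrite Nat.sub_0_r, EG. unfold letter_term. rewrite npow_opp.
  field. apply npow_neq0.
Qed.
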